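(* Let $\mathfrak d$ be a delta operator and let $\mathcal Z=(z_i)_{i\ge0}$, $\mathcal Z'=(z'_i)_{i\ge0}$ be grids such that, for a given $k\in\mathbb N$, $z_k\neq z'_k$ and $z_i=z'_i$ for all $i\neq k$. Then $t_n(x;\mathfrak d,\mathcal Z')=t_n(x;\mathfrak d,\mathcal Z)$ for $n\le k$, and for $n>k$, $$t_n(x;\mathfrak d,\mathcal Z')=t_n(x;\mathfrak d,\mathcal Z)-\binom nk\,t_{n-k}(z'_k;\mathfrak d,\mathcal Z^{(k)})\,t_k(x;\mathfrak d,\mathcal Z).$$
   Context: $\mathbb K$ is a field of characteristic zero; a delta operator is a linear operator $\mathfrak d$ on $\mathbb K[x]$ commuting with all shifts $E_a:f(x)\mapsto f(x+a)$ and with $\mathfrak d(x)$ a nonzero constant. $\varepsilon_z$ is evaluation at $z$. A grid is a sequence in $\mathbb K$; $\mathcal Z^{(k)}=(z_{i+k})_{i\ge0}$. $t_n(x;\mathfrak d,\mathcal Z)$ denotes the $n$-th term of the generalized Gončarov basis associated with $(\mathfrak d,\mathcal Z)$, i.e. the unique sequence $(t_n)_{n\ge0}$ with $\deg t_n=n$ and $\varepsilon_{z_i}(\mathfrak d^{\,i}(t_n))=n!\,\delta_{i,n}$ for all $i,n$. *)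

From HB Require Import structures.
From mathcomp Require Import all_boot all_order all_algebra.
Set Implicit Arguments. Unset Strict Implicit. Unset Printing Implicit Defensive.
Import GRing.Theory.
Local Open Scope ring_scope.

Definition shift (K : fieldType) (a : K) (p : {poly K}) : {poly K} :=
  p \Po ('X + a%:P).

Definition is_delta_operator (K : fieldType) (d : {poly K} -> {poly K}) : Prop :=
  [/\ (forall (a : K) (p q : {poly K}), d (a *: p + q) = a *: d p + d q),
      (forall (a : K) (p : {poly K}), d (shift a p) = shift a (d p)) &
      exists2 c : K, c != 0 & d 'X = c%:P].

Definition grid_shift (K : fieldType) (z : nat -> K) (k : nat) : nat -> K :=
  fun i => z (i + k)%N.

Definition is_goncarov_basis (K : fieldType) (d : {poly K} -> {poly K})
    (z : nat -> K) (t : nat -> {poly K}) : Prop :=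
  (forall n, size (t n) = n.+1) /\
  (forall i n, (iter i d (t n)).[z i] = (n`!)%:R * (i == n)%:R).

From HB Require Import structures.
From mathcomp Require Import all_boot all_order all_algebra.
Import GRing.Theory.
Local Open Scope ring_scope.
Set Implicit Arguments. Unset Strict Implicit.

(* A delta operator lowers degrees by one, so a polynomial of degree < m that
   is killed by the functionals p |-> (d^j p)(z_j), j < m, is zero: the
   Goncarov basis is determined by its interpolation conditions.  Moving z_k
   changes only the k-th condition.  For n <= k, d^k t_n is 0 or the constant
   k!, so t_n also meets the new condition.  For n > k, d^k t_n satisfies the
   conditions of the grid Z^(k) up to the factor n!/(n-k)!, hence equals
   C(n,k) k! t_(n-k)(.; Z^(k)); subtracting the stated multiple of t_k repairs
   the k-th condition and leaves the others untouched. *)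

Lemma pchar0_natr_inj (K : fieldType) : [pchar K] =i pred0 ->
  injective (fun n : nat => n%:R : K).
Proof.
move/pcharf0P=> natr_eq0 m n /= eq_mn.
wlog le_mn : m n eq_mn / (m <= n)%N.
  by move=> W; case: (leqP m n) => [|/ltnW] ?; [|apply/esym]; apply: W.
have : (n - m)%:R == 0 :> K by rewrite natrB // eq_mn subrr.
by rewrite natr_eq0 subn_eq0 => le_nm; apply/eqP; rewrite eqn_leq le_mn.
Qed.

Lemma pchar0_poly_natr_eq0 (K : fieldType) (p : {poly K}) :
  [pchar K] =i pred0 -> (forall n : nat, p.[n%:R] = 0) -> p = 0.
Proof.
move=> K0 p_nat; apply: (@roots_geq_poly_eq0 _ _ [seq i%:R | i <- iota 0 (size p)]).
- by apply/allP => _ /mapP[i _ ->]; apply/rootP.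
- by rewrite map_inj_uniq ?iota_uniq //; apply: pchar0_natr_inj.
- by rewrite size_map size_iota.
Qed.

Section DeltaOperator.

Variables (K : fieldType) (d : {poly K} -> {poly K}).
Hypotheses (K0 : [pchar K] =i pred0) (d_delta : is_delta_operator d).

Let d_linear : forall (a : K) (p q : {poly K}), d (a *: p + q) = a *: d p + d q.
Proof. by case: d_delta. Qed.

Let d_shift : forall (a : K) (p : {poly K}), d (shift a p) = shift a (d p).
Proof. by case: d_delta. Qed.

HB.instance Definition _ := GRing.isLinear.Build K {poly K} {poly K} _ d d_linear.

Lemma delta1 : d 1 = 0.
Proof.
have [_ _ [c _ d_X]] := d_delta.
have := d_shift 1 'X; rewrite /shift comp_polyX d_X comp_polyC.
by rewrite linearD /= d_X polyC1 -[RHS]addr0 => /addrI.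
Qed.

Lemma horner_delta (p : {poly K}) (a : K) : (d p).[a] = (d (shift a p)).[0].
Proof. by rewrite d_shift /shift horner_comp hornerD hornerX hornerC add0r. Qed.

Lemma shift_Xn (a : K) n :
  shift a 'X^n = \sum_(i < n.+1) ('C(n, i)%:R * a ^+ i) *: 'X^(n - i).
Proof.
rewrite /shift comp_Xn_poly exprDn; apply: eq_bigr => i _.
by rewrite -rmorphXn /= mulrC mul_polyC -scaler_nat scalerA.
Qed.

Lemma size_delta_Xn n : (size (d 'X^n) <= n)%N.
Proof.
(* (d 'X^n).[a] = (d ('X + a)^n).[0] is a polynomial in a whose top term,
   a^n (d 1).[0], vanishes. *)
pose e j := (d 'X^j).[0].
suff -> : d 'X^n = \poly_(i < n) ('C(n, i)%:R * e (n - i)%N) by apply: size_poly.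
apply/eqP; rewrite -subr_eq0; apply/eqP/pchar0_poly_natr_eq0 => // m.
rewrite hornerD hornerN horner_delta horner_poly shift_Xn big_ord_recr /=.
rewrite linearD linearZ /= subnn expr0 delta1 scaler0 addr0 linear_sum horner_sum.
apply/eqP; rewrite subr_eq0; apply/eqP/eq_bigr => i _.
by rewrite linearZ hornerZ mulrAC.
Qed.

Lemma size_delta p : (size (d p) <= (size p).-1)%N.
Proof.
rewrite -{1}[p]coefK poly_def linear_sum /=.
apply: (big_ind (fun q : {poly K} => size q <= (size p).-1)%N) => [||i _].
- by rewrite size_poly0.
- by move=> q r q_le r_le; rewrite (leq_trans (size_polyD _ _)) // geq_max q_le.
rewrite linearZ /= (leq_trans (size_scale_leq _ _)) // (leq_trans (size_delta_Xn _)) //.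
by rewrite -ltnS (leq_trans (ltn_ord i)) // leqSpred.
Qed.

Lemma size_iter_delta j p : (size (iter j d p) <= size p - j)%N.
Proof.
elim: j => [|j IHj] /=; first by rewrite subn0.
by rewrite (leq_trans (size_delta _)) // subnS -!subn1 leq_sub2r.
Qed.

Lemma iter_deltaZ j a p : iter j d (a *: p) = a *: iter j d p.
Proof. by elim: j => //= j ->; rewrite linearZ. Qed.

Lemma iter_deltaB j p q : iter j d (p - q) = iter j d p - iter j d q.
Proof. by elim: j => //= j ->; rewrite linearB. Qed.

Section GoncarovBasis.

Variables (w : nat -> K) (b : nat -> {poly K}).
Hypothesis b_basis : is_goncarov_basis d w b.

Lemma iter_delta_basis_gt n j : (n < j)%N -> iter j d (b n) = 0.
Proof.
move=> lt_nj; apply/eqP; rewrite -size_poly_eq0 -leqn0.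
by rewrite (leq_trans (size_iter_delta _ _)) // b_basis.1 leqn0 subn_eq0.
Qed.

Lemma iter_delta_basis_diag n : iter n d (b n) = (n`!)%:R%:P.
Proof.
have size_le1 : (size (iter n d (b n)) <= 1)%N.
  by rewrite (leq_trans (size_iter_delta _ _)) // b_basis.1 subSnn.
rewrite [LHS](size1_polyC size_le1); congr _%:P.
by have := b_basis.2 n n; rewrite {1}(size1_polyC size_le1) hornerC eqxx mulr1.
Qed.

Lemma goncarov_size_drop m (u : {poly K}) : (size u <= m.+1)%N ->
  (iter m d u).[w m] = 0 -> (size u <= m)%N.
Proof.
move=> size_u u_m.
have lead_bm : (b m)`_m != 0.
  have := lead_coef_eq0 (b m); rewrite lead_coefE b_basis.1 => ->.
  by rewrite -size_poly_eq0 b_basis.1.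
(* [u - a *: b m] has degree < m, so iter m d kills it. *)
pose a := u`_m / (b m)`_m.
have size_v : (size (u - a *: b m)%R <= m)%N.
  apply/leq_sizeP => i; rewrite leq_eqVlt coefB coefZ => /orP[/eqP <- | lt_mi].
    by rewrite /a divfK // subrr.
  by rewrite !nth_default ?mulr0 ?subrr ?b_basis.1 // (leq_trans size_u).
suff a0 : a = 0 by rewrite a0 scale0r subr0 in size_v.
have v_m : iter m d (u - a *: b m) = 0.
  apply/eqP; rewrite -size_poly_eq0 -leqn0.
  by rewrite (leq_trans (size_iter_delta _ _)) // leqn0 subn_eq0.
move: v_m u_m; rewrite iter_deltaB iter_deltaZ iter_delta_basis_diag => /subr0_eq ->.
rewrite hornerZ hornerC => /eqP; rewrite mulf_eq0 => /orP[/eqP //|].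
by move/pcharf0P: K0 => ->; rewrite -leqn0 leqNgt fact_gt0.
Qed.

Lemma goncarov_eq0 m (u : {poly K}) : (size u <= m)%N ->
  (forall j, (j < m)%N -> (iter j d u).[w j] = 0) -> u = 0.
Proof.
elim: m u => [|m IHm] u size_u u_vanish.
  by apply/eqP; rewrite -size_poly_eq0 -leqn0.
apply: IHm => [|j lt_jm]; last exact/u_vanish/ltnW.
exact/goncarov_size_drop/u_vanish.
Qed.

Lemma goncarov_basis_unique n (s : {poly K}) : (size s <= n.+1)%N ->
  (forall j, (iter j d s).[w j] = (n`!)%:R * (j == n)%:R) -> b n = s.
Proof.
move=> size_s s_eval; apply/eqP; rewrite -subr_eq0; apply/eqP.
apply: (goncarov_eq0 (m := n.+1)) => [|j _].
  rewrite (leq_trans (size_polyD _ _)) //.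
  by rewrite size_polyN geq_max b_basis.1 size_s ltnSn.
by rewrite iter_deltaB hornerD hornerN s_eval b_basis.2 subrr.
Qed.

End GoncarovBasis.

Lemma iter_delta_goncarov_shift w (b bk : nat -> {poly K}) k n :
  is_goncarov_basis d w b -> is_goncarov_basis d (grid_shift w k) bk -> (k <= n)%N ->
  iter k d (b n) = ('C(n, k) * k`!)%:R *: bk (n - k)%N.
Proof.
move=> [size_b b_eval] bk_basis le_kn; apply/eqP; rewrite -subr_eq0; apply/eqP.
apply: (goncarov_eq0 bk_basis (m := (n - k).+1)) => [|j _].
  rewrite (leq_trans (size_polyD _ _)) // size_polyN geq_max.
  rewrite (leq_trans (size_scale_leq _ _)) ?bk_basis.1 // andbT.
  by rewrite (leq_trans (size_iter_delta _ _)) // size_b subSn.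
rewrite iter_deltaB iter_deltaZ hornerD hornerN hornerZ -iterD bk_basis.2 b_eval.
rewrite -[j == _](eqn_add2r k) subnK // [X in _ - X]mulrA -[in X in _ - X]natrM.
by rewrite -mulnA bin_fact // subrr.
Qed.

End DeltaOperator.

Theorem mainTheorem12 (K : fieldType) (hK : [pchar K] =i pred0)
  (d : {poly K} -> {poly K}) (hd : is_delta_operator d)
  (z z' : nat -> K) (k : nat)
  (hzk : z k != z' k) (hz : forall i, i != k -> z i = z' i)
  (t t' tk : nat -> {poly K})
  (ht : is_goncarov_basis d z t) (ht' : is_goncarov_basis d z' t')
  (htk : is_goncarov_basis d (grid_shift z k) tk) :
  (forall n, (n <= k)%N -> t' n = t n) /\
  (forall n, (k < n)%N ->
     t' n = t n - ('C(n, k))%:R * (tk (n - k)%N).[z' k] *: t k).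
Proof.
have [size_t t_eval] := ht.
have t_eval' n j : j != k -> (iter j d (t n)).[z' j] = (n`!)%:R * (j == n)%:R.
  by move=> /hz <-; rewrite t_eval.
split=> n.
- move=> le_nk; apply: (goncarov_basis_unique hK hd ht'); first by rewrite size_t.
  move=> j; have [->|/t_eval' //] := eqVneq j k.
  move: le_nk; rewrite leq_eqVlt => /orP[/eqP -> | lt_nk].
    by rewrite (iter_delta_basis_diag hK hd ht) hornerC eqxx mulr1.
  by rewrite (iter_delta_basis_gt hK hd ht) // horner0 gtn_eqF // mulr0.
move=> lt_kn; apply: (goncarov_basis_unique hK hd ht') => [|j].
  rewrite (leq_trans (size_polyD _ _)) // size_polyN geq_max size_t leqnn.
  by rewrite (leq_trans (size_scale_leq _ _)) // size_t ltnS (ltnW lt_kn).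
rewrite (iter_deltaB hd) (iter_deltaZ hd) hornerD hornerN hornerZ.
have [-> | ne_jk] := eqVneq j k; last by rewrite !t_eval' // (negbTE ne_jk) !mulr0 subr0.
rewrite (iter_delta_goncarov_shift hK hd ht htk (ltnW lt_kn)) hornerZ.
by rewrite (iter_delta_basis_diag hK hd ht) hornerC ltn_eqF // mulr0 natrM mulrAC subrr.
Qed.
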